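(* Let $\mathcal{Q}$ be a poset and let $\mathfrak X$ be an algebra on $\mathcal{Q}$ such that the category $\mathrm{Vect}^{\mathcal{Q}}_{\mathfrak X}$ of finitely $\mathfrak X$-encoded persistence modules is a full abelian subcategory of $\mathrm{Vect}^{\mathcal{Q}}$. Let $\mathfrak X_{\mathrm{Up}}$ be the algebra on $\mathcal{Q}$ generated by the upsets of $\mathcal{Q}$ that belong to $\mathfrak X$. Then the map \[ \nu \longmapsto \Big( M \mapsto \int_{\mathcal{Q}} \dim(M)\, d\nu \Big) \] from the set of contents on $\mathfrak X_{\mathrm{Up}}$ to the class of additive amplitudes on $\mathrm{Vect}^{\mathcal{Q}}_{\mathfrak X}$ is a bijection. In other words, every additive amplitude on $\mathrm{Vect}^{\mathcal{Q}}_{\mathfrak X}$ is given by integrating the Hilbert function $q\mapsto \dim M(q)$ against a unique content on $\mathfrak X_{\mathrm{Up}}$.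
   Context: $\mathrm{Vect}$ is the category of finite-dimensional vector spaces over a fixed field $\mathbb F$; a persistence module over a poset $\mathcal{Q}$ is a functor $\mathcal{Q}\to\mathrm{Vect}$ ($\mathcal{Q}$ viewed as a category). An algebra on a set is a family of subsets containing $\emptyset$ and closed under complements and finite unions. An upset of $\mathcal{Q}$ is a subset $U$ with $u\in U, u\le q\Rightarrow q\in U$; a downset is defined dually; an interval is an intersection of an upset and a downset. A finite encoding of $M\in\mathrm{Vect}^{\mathcal{Q}}$ consists of an order-preserving map $e\colon\mathcal{Q}\to\mathcal{P}$ to a finite poset $\mathcal{P}$, a module $M'\in\mathrm{Vect}^{\mathcal{P}}$ and an isomorphism $M\cong e^*M'=M'\circ e$; it is an $\mathfrak X$-encoding if every fiber $e^{-1}(p)$ belongs to $\mathfrak X$. $M$ is finitely $\mathfrak X$-encoded if it admits an $\mathfrak X$-encoding; $\mathrm{Vect}^{\mathcal{Q}}_{\mathfrak X}$ is the full subcategory of such modules. For an abelian category $\mathcal{A}$, an amplitude is a function $\alpha\colon\operatorname{ob}\mathcal{A}\to[0,\infty]$ with $\alpha(0)=0$ such that for every short exact sequence $0\to A\to B\to C\to 0$ one has $\alpha(A)\le\alpha(B)$, $\alpha(C)\le\alpha(B)$ and $\alpha(B)\le\alpha(A)+\alpha(C)$; it is additive if always $\alpha(B)=\alpha(A)+\alpha(C)$. A content on an algebra $\mathfrak A$ is a function $\nu\colon\mathfrak A\to[0,\infty]$ with $\nu(\emptyset)=0$ and $\nu(X\cup Y)=\nu(X)+\nu(Y)$ for disjoint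 $X,Y\in\mathfrak A$. For $M$ in $\mathrm{Vect}^{\mathcal{Q}}_{\mathfrak X}$ the Hilbert function $\dim(M)\colon q\mapsto\dim M(q)$ takes finitely many values with level sets in $\mathfrak X_{\mathrm{Up}}$, and the integral of such a finitely-valued function $f=\sum_i\lambda_i 1_{X_i}$ is defined as $\int f\,d\nu=\sum_i\lambda_i\nu(X_i)$. *)

From HB Require Import structures.
From mathcomp Require Import all_boot all_order all_algebra.
From mathcomp Require Import boolp classical_sets reals constructive_ereal.

Set Implicit Arguments.
Unset Strict Implicit.
Unset Printing Implicit Defensive.

Import Order.TTheory GRing.Theory Num.Theory.
Local Open Scope classical_set_scope.
Local Open Scope ring_scope.

Section SetAlgebras.
Context (T : Type).

Definition is_algebra (X : set (set T)) : Prop :=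
  [/\ X set0,
      (forall A, X A -> X (~` A)) &
      (forall A B, X A -> X B -> X (A `|` B))].

Definition gen_algebra (G : set (set T)) : set (set T) :=
  fun A => forall Y : set (set T), is_algebra Y -> G `<=` Y -> Y A.

End SetAlgebras.

Definition is_upset (d : Order.disp_t) (Q : porderType d) (U : set Q) : Prop :=
  forall u q : Q, U u -> (u <= q)%O -> U q.

Section Contents.
Context (T : Type) (R : realType).
Local Open Scope ereal_scope.

Definition content (A : set (set T)) (nu : set T -> \bar R) : Prop :=
  [/\ nu set0 = 0,
      (forall X, A X -> 0 <= nu X) &
      (forall X Y, A X -> A Y -> X `&` Y = set0 -> nu (X `|` Y) = nu X + nu Y)].

Definition hbound (f : T -> nat) : nat :=
  match pselect (exists N : nat, forall q, (f q < N)%N) with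
  | left h => proj1_sig (cid h)
  | right _ => 0%N
  end.

(* integral of a finitely-valued function f = sum_n n * 1_{f = n}:
   int f dnu = sum_n n * nu (f^{-1}(n)) *)
Definition nat_integral (nu : set T -> \bar R) (f : T -> nat) : \bar R :=
  \sum_(n < hbound f) ((n%:R)%:E * nu (f @^-1` [set (n : nat)])).

End Contents.

(* Persistence modules Q -> Vect (finite-dim F-vector spaces, modelled *)
(* by F^n with linear maps as matrices acting on row vectors)          *)
Section PMod.
Context (F : fieldType) (d : Order.disp_t) (Q : porderType d).

Record pmod := PMod {
  pdim : Q -> nat;
  pmap : forall p q : Q, (p <= q)%O -> 'M[F]_(pdim p, pdim q);
  pmap_id : forall p (h : (p <= p)%O), pmap h = 1%:M;
  pmap_comp : forall p q r (h1 : (p <= q)%O) (h2 : (q <= r)%O) (h3 : (p <= r)%O),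
      pmap h3 = pmap h1 *m pmap h2
}.

Definition is_nat (M N : pmod) (f : forall q, 'M[F]_(pdim M q, pdim N q)) : Prop :=
  forall p q (h : (p <= q)%O), pmap M h *m f q = f p *m pmap N h.

Definition pm_iso (M N : pmod) : Prop :=
  exists (f : forall q, 'M[F]_(pdim M q, pdim N q))
         (g : forall q, 'M[F]_(pdim N q, pdim M q)),
    [/\ is_nat f, is_nat g &
        forall q, f q *m g q = 1%:M /\ g q *m f q = 1%:M].

Definition ses (A B C : pmod)
    (f : forall q, 'M[F]_(pdim A q, pdim B q))
    (g : forall q, 'M[F]_(pdim B q, pdim C q)) : Prop :=
  [/\ is_nat f, is_nat g &
      forall q, [&& row_free (f q), row_full (g q) & (f q == kermx (g q))%MS]].

End PMod.

Section Pullback.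
Context (F : fieldType) (d d' : Order.disp_t) (Q : porderType d) (P : porderType d').
Context (M' : pmod F P) (e : Q -> P) (he : {homo e : x y / (x <= y)%O}).

Definition pb_map (p q : Q) (h : (p <= q)%O) : 'M[F]_(pdim M' (e p), pdim M' (e q)) :=
  pmap M' (he h).

Lemma pb_map_id p (h : (p <= p)%O) : pb_map h = 1%:M.
Proof. exact: pmap_id. Qed.

Lemma pb_map_comp p q r (h1 : (p <= q)%O) (h2 : (q <= r)%O) (h3 : (p <= r)%O) :
  pb_map h3 = pb_map h1 *m pb_map h2.
Proof. exact: pmap_comp. Qed.

Definition pullback : pmod F Q := PMod pb_map_id pb_map_comp.

End Pullback.

Definition encoded (F : fieldType) (d : Order.disp_t) (Q : porderType d)
    (X : set (set Q)) (M : pmod F Q) : Prop :=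
  exists (dP : Order.disp_t) (P : finPOrderType dP) (e : Q -> P)
         (he : {homo e : x y / (x <= y)%O}) (M' : pmod F P),
    (forall p : P, X (e @^-1` [set p])) /\ pm_iso M (pullback M' he).

(* Vect^Q_X is a full abelian subcategory of Vect^Q: closed under
   (pointwise, i.e. ambient) kernels and cokernels of its morphisms.
   (Zero and finite direct sums are always X-encoded for an algebra X.) *)
Definition abelian_sub (F : fieldType) (d : Order.disp_t) (Q : porderType d)
    (X : set (set Q)) : Prop :=
  (forall (M N K : pmod F Q) (f : forall q, 'M[F]_(pdim M q, pdim N q))
          (k : forall q, 'M[F]_(pdim K q, pdim M q)),
      encoded X M -> encoded X N -> is_nat f -> is_nat k ->
      (forall q, row_free (k q) && (k q == kermx (f q))%MS) -> encoded X K)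
  /\
  (forall (M N C : pmod F Q) (f : forall q, 'M[F]_(pdim M q, pdim N q))
          (c : forall q, 'M[F]_(pdim N q, pdim C q)),
      encoded X M -> encoded X N -> is_nat f -> is_nat c ->
      (forall q, row_full (c q) && (f q == kermx (c q))%MS) -> encoded X C).

Section Amplitudes.
Context (F : fieldType) (d : Order.disp_t) (Q : porderType d) (R : realType).
Local Open Scope ereal_scope.

Definition amplitude (Cat : pmod F Q -> Prop) (alpha : pmod F Q -> \bar R) : Prop :=
  [/\ (forall M, Cat M -> 0 <= alpha M),
      (forall Z, Cat Z -> (forall q, pdim Z q = 0%N) -> alpha Z = 0) &
      (forall (A B C : pmod F Q) f g, Cat A -> Cat B -> Cat C -> @ses F d Q A B C f g ->
         [/\ alpha A <= alpha B, alpha C <= alpha B & alpha B <= alpha A + alpha C])].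

Definition additive_amplitude (Cat : pmod F Q -> Prop) (alpha : pmod F Q -> \bar R) : Prop :=
  amplitude Cat alpha /\
  (forall (A B C : pmod F Q) f g, Cat A -> Cat B -> Cat C -> @ses F d Q A B C f g ->
     alpha B = alpha A + alpha C).

End Amplitudes.

From Pilot Require Import Defs.
From mathcomp Require Import all_boot all_order all_algebra.
From mathcomp Require Import boolp classical_sets reals constructive_ereal.

(* An encoding e : Q -> P of M, with fibres in X, exhibits M as e^* M'. Each
   fibre {e = p} = {e >= p} \ {e > p} is a difference of upsets in X, so the
   Hilbert function of M is constant on a finite X_Up-partition and its
   integral is the finite sum of dim M'(p) nu(e^-1 p); since dimensions are
   additive along short exact sequences, nu |-> int dim(-) dnu produces additive
   amplitudes.  Conversely, the sets e^-1(T) over all encodings e form an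
   algebra (take products of encodings) containing the upsets of X, hence all
   of X_Up.  An additive amplitude alpha gives each fibre the value
   c(e^-1 p) = alpha(k_{e^-1 p}) of its indicator module, and filtering
   e^* M' along the downsets of P gives alpha(M) = sum_p dim M'(p) c(e^-1 p).
   Thus nu(e^-1 T) := sum_{p in T} c(e^-1 p) is the unique candidate; it does
   not depend on the encoding, because refining an encoding splits the
   indicator module of a fibre along the finer fibres in the same way. *)

Set Implicit Arguments.
Unset Strict Implicit.
Unset Printing Implicit Defensive.
Import Order.TTheory GRing.Theory Num.Theory.

Local Notation pmap := Defs.pmap.
Local Open Scope classical_set_scope.
Local Open Scope ring_scope.

Section ConditionalMatrix.
Variable F : fieldType.

(* [A] if both [a] and [b] hold, and otherwise an empty (zero-sized) matrix:
   the block of a structure map seen by a restriction to a subset. *)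
Definition mxcond (a b : bool) m n (A : 'M[F]_(m, n)) :
    'M[F]_(if a then m else 0, if b then n else 0) :=
  match a, b with true, true => A | _, _ => 0 end.

Lemma mulmx_cond (a b c : bool) m n k (A : 'M[F]_(m, n)) (B : 'M[F]_(n, k)) :
  (a -> c -> b) -> mxcond a b A *m mxcond b c B = mxcond a c (A *m B).
Proof.
case: a; case: b; case: c => //= abc;
  try (by apply/matrixP => i j; case: i); try (by apply/matrixP => i j; case: j).
by have := abc isT isT.
Qed.

Lemma eq_mxcond (a b : bool) m n (A B : 'M[F]_(m, n)) :
  (a -> b -> A = B) -> mxcond a b A = mxcond a b B.
Proof. by case: a; case: b => //= ->. Qed.

Definition mx_exact m n k (A : 'M[F]_(m, n)) (B : 'M[F]_(n, k)) : bool :=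
  [&& row_free A, row_full B & (A == kermx B)%MS].

Lemma row_full_thin n (B : 'M[F]_(n, 0)) : row_full B.
Proof. by rewrite /row_full -leqn0 rank_leq_col. Qed.

Lemma row_free_flat n (A : 'M[F]_(0, n)) : row_free A.
Proof. by rewrite /row_free -leqn0 rank_leq_row. Qed.

Lemma mx_exact_unit0 m n (A : 'M[F]_(m, n)) :
  row_free A -> row_full A -> mx_exact A (0 : 'M_(n, 0)).
Proof. by move=> freeA fullA; rewrite /mx_exact freeA row_full_thin /= !kermx0 submx1 sub1mx. Qed.

Lemma mx_exact0_unit m n (B : 'M[F]_(m, n)) :
  row_free B -> row_full B -> mx_exact (0 : 'M_(0, m)) B.
Proof.
move=> freeB fullB; rewrite /mx_exact fullB row_free_flat.
by move: freeB; rewrite -kermx_eq0 => /eqP ->; rewrite !sub0mx.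
Qed.

Lemma mx_exact00 : mx_exact (0 : 'M[F]_(0, 0)) (0 : 'M[F]_(0, 0)).
Proof. by rewrite /mx_exact row_free_flat row_full_thin (flatmx0 (kermx _)); apply/eqmxP. Qed.

Lemma mx_exact_cond (a b c : bool) m n k (A : 'M[F]_(m, n)) (B : 'M[F]_(n, k)) :
  (~~ c -> ~~ a && ~~ b) -> (c -> mx_exact (mxcond a true A) (mxcond true b B)) ->
  mx_exact (mxcond a c A) (mxcond c b B).
Proof.
case: c => /=; first by move=> _ ->.
by case: a; case: b => //= abc _; first [by have := abc isT | exact: mx_exact00].
Qed.

Lemma mulmx_inv_free_full m n (A : 'M[F]_(m, n)) (B : 'M[F]_(n, m)) :
  A *m B = 1%:M -> B *m A = 1%:M -> row_free A && row_full A.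
Proof. by move=> AB BA; apply/andP; split; [apply/row_freeP | apply/row_fullP]; exists B. Qed.

Lemma mulmx_inv_dim m n (A : 'M[F]_(m, n)) (B : 'M[F]_(n, m)) :
  A *m B = 1%:M -> B *m A = 1%:M -> m = n.
Proof. by move=> AB BA; apply/anti_leq; rewrite (mulmx1_min AB) (mulmx1_min BA). Qed.

Definition row_head_mx m : 'M[F]_(1, 1 + m) := row_mx 1%:M 0.
Definition col_behead_mx m : 'M[F]_(1 + m, m) := col_mx 0 1%:M.

Lemma mx_exact_head_behead m : mx_exact (row_head_mx m) (col_behead_mx m).
Proof.
have rank_head : \rank (row_head_mx m) = 1%N by rewrite rank_row_mx0 mxrank1.
have rank_behead : \rank (col_behead_mx m) = m by rewrite rank_col_0mx mxrank1.
rewrite /mx_exact /row_free /row_full rank_head rank_behead !eqxx /=.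
have head_ker : (row_head_mx m <= kermx (col_behead_mx m))%MS.
  by rewrite sub_kermx mul_row_col mulmx0 mul0mx addr0.
by rewrite -(eq_leqif (mxrank_leqif_eq head_ker)) mxrank_ker rank_head rank_behead addnK.
Qed.

End ConditionalMatrix.

Section Modules.
Variables (F : fieldType) (d : Order.disp_t) (Q : porderType d).

Definition order_convex (C : pred Q) : Prop :=
  forall p q r, (p <= q)%O -> (q <= r)%O -> C p -> C r -> C q.

Lemma PMod_eq (dim : Q -> nat) (map : forall p q, (p <= q)%O -> 'M[F]_(dim p, dim q))
    map_id1 map_id2 map_comp1 map_comp2 :
  @PMod F d Q dim map map_id1 map_comp1 = @PMod F d Q dim map map_id2 map_comp2.
Proof. by rewrite (Prop_irrelevance map_id1 map_id2) (Prop_irrelevance map_comp1 map_comp2). Qed.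

Section Restriction.
Variables (M : pmod F Q) (C : pred Q) (convC : order_convex C).

Definition restr_map p q (h : (p <= q)%O) := mxcond (C p) (C q) (pmap M h).

Lemma restr_map_id p (h : (p <= p)%O) : restr_map h = 1%:M.
Proof. by rewrite /restr_map pmap_id; case: (C p); last by apply/matrixP => -[]. Qed.

Lemma restr_map_comp p q r (h1 : (p <= q)%O) (h2 : (q <= r)%O) (h3 : (p <= r)%O) :
  restr_map h3 = restr_map h1 *m restr_map h2.
Proof.
rewrite /restr_map mulmx_cond; last by move=> Cp Cr; apply: convC h1 h2 Cp Cr.
by rewrite (pmap_comp _ h1 h2).
Qed.

Definition restr_pmod : pmod F Q := PMod restr_map_id restr_map_comp.

End Restriction.

Lemma restr_pmod_ext (M : pmod F Q) (C1 C2 : pred Q) (conv1 : order_convex C1)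
    (conv2 : order_convex C2) :
  C1 =1 C2 -> restr_pmod M conv1 = restr_pmod M conv2.
Proof. by move=> /funext eC; subst C2; rewrite (Prop_irrelevance conv1 conv2). Qed.

Lemma restr_pmod_predT (M : pmod F Q) (convT : order_convex predT) :
  restr_pmod M convT = M.
Proof. by case: M convT => dim map map_id map_comp convT; apply: PMod_eq. Qed.

Section Constant.
Variable m : nat.

Definition const_map (p q : Q) (h : (p <= q)%O) : 'M[F]_m := 1%:M.

Lemma const_map_id p (h : (p <= p)%O) : const_map h = 1%:M.
Proof. by []. Qed.

Lemma const_map_comp p q r (h1 : (p <= q)%O) (h2 : (q <= r)%O) (h3 : (p <= r)%O) :
  const_map h3 = const_map h1 *m const_map h2.
Proof. by rewrite mul1mx. Qed.

Definition const_pmod : pmod F Q := @PMod F d Q (fun=> m) const_map const_map_id const_map_comp.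

End Constant.

Definition indicator_pmod (C : pred Q) (convC : order_convex C) (m : nat) :=
  restr_pmod (const_pmod m) convC.

Lemma pm_iso_refl (M : pmod F Q) : pm_iso M M.
Proof.
by exists (fun=> 1%:M), (fun=> 1%:M); split=> [p q h | p q h | q]; rewrite ?mul1mx ?mulmx1.
Qed.

Lemma pm_iso_pdim (M N : pmod F Q) : pm_iso M N -> forall q, pdim M q = pdim N q.
Proof. by move=> [f [g [_ _ fg]]] q; have [] := fg q; apply: mulmx_inv_dim. Qed.

Lemma ses_pdim (A B C : pmod F Q) f g :
  @ses F d Q A B C f g -> forall q, pdim B q = (pdim A q + pdim C q)%N.
Proof.
move=> [_ _ exact_fg] q; have /and3P[free_f full_g /eqmxP ker_g] := exact_fg q.
move: (mxrank_ker (g q)); rewrite -ker_g (eqP free_f) (eqP full_g) => ->.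
by rewrite subnK // -(eqP full_g) rank_leq_row.
Qed.

Lemma ses_indicator_succ (C : pred Q) (convC : order_convex C) m :
  @ses F d Q (indicator_pmod convC 1) (indicator_pmod convC m.+1) (indicator_pmod convC m)
    (fun q => mxcond (C q) (C q) (row_head_mx F m))
    (fun q => mxcond (C q) (C q) (col_behead_mx F m)).
Proof.
split=> [p q h | p q h | q] /=.
- by rewrite /restr_map !mulmx_cond //; apply: eq_mxcond; rewrite mul1mx mulmx1.
- by rewrite /restr_map !mulmx_cond //; apply: eq_mxcond; rewrite mul1mx mulmx1.
- apply: mx_exact_cond; first by move/negbTE ->.
  by move=> ->; apply: mx_exact_head_behead.
Qed.

(* The short exact sequence 0 -> N1|C1 -> N|C -> N|C2 -> 0 of a convex set C
   split into an upper part C1 (where N1 ~= N) and a lower part C2. *)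
Lemma ses_restr (N1 N : pmod F Q) (C1 C C2 : pred Q)
    (conv1 : order_convex C1) (conv : order_convex C) (conv2 : order_convex C2)
    (phi : forall q, 'M[F]_(pdim N1 q, pdim N q)) :
  (forall q, C1 q -> C q) -> (forall q, C2 q -> C q) ->
  (forall q, C q -> C1 q = ~~ C2 q) ->
  (forall p q, (p <= q)%O -> C1 p -> C q -> C1 q) ->
  (forall p q, (p <= q)%O -> C p -> C2 q -> C2 p) ->
  (forall q, C1 q -> row_free (phi q) && row_full (phi q)) ->
  (forall p q (h : (p <= q)%O), C1 p -> C1 q -> pmap N1 h *m phi q = phi p *m pmap N h) ->
  @ses F d Q (restr_pmod N1 conv1) (restr_pmod N conv) (restr_pmod N conv2)
    (fun q => mxcond (C1 q) (C q) (phi q)) (fun q => mxcond (C q) (C2 q) 1%:M).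
Proof.
move=> sub1 sub2 compl up1 down2 phi_iso phi_nat; split=> [p q h | p q h | q] /=.
- rewrite /restr_map mulmx_cond; last by move=> C1p Cq; apply: up1 h C1p Cq.
  rewrite mulmx_cond; last by move=> C1p _; apply: sub1.
  by apply: eq_mxcond => C1p Cq; apply: phi_nat => //; apply: up1 h C1p Cq.
- rewrite /restr_map mulmx_cond; last by move=> _ C2q; apply: sub2.
  rewrite mulmx_cond; last by move=> Cp C2q; apply: down2 h Cp C2q.
  by apply: eq_mxcond; rewrite mulmx1 mul1mx.
- apply: mx_exact_cond.
    by case Cq: (C q) => //= _; apply/andP; split; apply/negP;
      [move/sub1 | move/sub2]; rewrite Cq.
  move=> Cq; have := compl _ Cq; case C1q: (C1 q); case: (C2 q) => //= _.
    by have /andP[free full] := phi_iso q C1q; apply: mx_exact_unit0.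
  by apply: mx_exact0_unit; rewrite /row_free /row_full mxrank1.
Qed.

End Modules.

Section PullbackModules.
Variables (F : fieldType) (d d' : Order.disp_t) (Q : porderType d) (P : porderType d').
Variables (e : Q -> P) (e_homo : {homo e : x y / (x <= y)%O}).

Lemma pullback_const m : pullback (const_pmod F P m) e_homo = const_pmod F Q m.
Proof. exact: PMod_eq. Qed.

Lemma pullback_indicator (T : pred P) (convT : order_convex T)
    (convTe : order_convex (fun q => T (e q))) m :
  pullback (indicator_pmod F convT m) e_homo = indicator_pmod F convTe m.
Proof. exact: PMod_eq. Qed.

Lemma ses_pullback (A B C : pmod F P) f g : @ses F d' P A B C f g ->
  @ses F d Q (pullback A e_homo) (pullback B e_homo) (pullback C e_homo)
    (fun q => f (e q)) (fun q => g (e q)).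
Proof.
by case=> f_nat g_nat fg_exact; split=> [p q h | p q h | q];
  [apply: f_nat | apply: g_nat | apply: fg_exact].
Qed.

End PullbackModules.

Section EncodedModules.
Variables (F : fieldType) (d : Order.disp_t) (Q : porderType d) (X : set (set Q)).

Lemma encoded_pullback (dP : Order.disp_t) (P : finPOrderType dP) (e : Q -> P)
    (e_homo : {homo e : x y / (x <= y)%O}) (N : pmod F P) :
  (forall p, X (e @^-1` [set p])) -> encoded X (pullback N e_homo).
Proof. by move=> fibreX; exists dP, P, e, e_homo, N; split; last exact: pm_iso_refl. Qed.

Lemma encoded_const (M : pmod F Q) m : encoded X M -> encoded X (const_pmod F Q m).
Proof.
move=> [dP [P [e [e_homo [_ [fibreX _]]]]]].
by rewrite -(pullback_const F e_homo m); apply: encoded_pullback.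
Qed.

End EncodedModules.

Section FinitePoset.
Variables (d : Order.disp_t) (P : finPOrderType d).

Definition is_downset (T : {set P}) : Prop :=
  forall p r, (p <= r)%O -> r \in T -> p \in T.

Lemma order_convex_pred1 (p : P) : order_convex (pred1 p).
Proof. by move=> a b c ab bc /eqP ea /eqP ec; subst a c; rewrite /= eq_le bc ab. Qed.

Lemma order_convex_downset (T : {set P}) : is_downset T -> order_convex (fun p => p \in T).
Proof. by move=> downT a b c _ bc _ cT; apply: downT bc cT. Qed.

Lemma exists_maximal (T : {set P}) p0 : p0 \in T ->
  exists2 p, p \in T & forall r, r \in T -> (p <= r)%O -> r = p.
Proof.
move=> p0T; pose below (p : P) := finset (fun x => (x <= p)%O).
have [p pT p_max] := @arg_maxnP P p0 (mem T) (fun p => #|below p|) p0T.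
exists p => // r rT pr; apply/eqP; rewrite eq_le pr andbT.
have below_sub : below p \subset below r.
  by apply/fintype.subsetP => x; rewrite !inE => xp; apply: le_trans xp pr.
have : below p == below r by rewrite eqEcard below_sub; apply: p_max.
by move/eqP/setP/(_ r); rewrite !inE lexx => ->.
Qed.

Lemma ses_restr_maximal (F : fieldType) (N : pmod F P) (T : {set P}) p
    (downT : is_downset T) (downTp : is_downset (T :\ p)) :
  p \in T -> (forall r, r \in T -> (p <= r)%O -> r = p) ->
  exists f g, @ses F d P (indicator_pmod F (@order_convex_pred1 p) (pdim N p))
    (restr_pmod N (order_convex_downset downT)) (restr_pmod N (order_convex_downset downTp)) f g.
Proof.
move=> pT p_max; set m := pdim N p.
pose phi r : 'M[F]_(m, pdim N r) := pid_mx m.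
have phi_iso r : r == p -> row_free (phi r) && row_full (phi r).
  by move=> /eqP->; rewrite /phi pid_mx_1 /row_free /row_full mxrank1 eqxx.
have phi_nat a b (h : (a <= b)%O) : a == p -> b == p ->
    pmap (const_pmod F P m) h *m phi b = phi a *m pmap N h.
  by move=> /eqP ea /eqP eb; subst a b; rewrite /= /const_map /phi pmap_id pid_mx_1 mul1mx.
eexists; eexists.
refine (ses_restr (N1 := const_pmod F P m) (phi := phi) _ _ _ _ _ _ _ _ phi_iso phi_nat).
- by move=> r /eqP->.
- by move=> r; rewrite inE => /andP[].
- by move=> r rT; rewrite !inE rT andbT negbK.
- by move=> a b ab /eqP ea bT; subst a; rewrite /= (p_max _ bT ab).
- by move=> a b ab aT /(downTp _ _ ab).
Qed.

End FinitePoset.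
Arguments order_convex_pred1 {d P} p.

Section Fibres.
Variables (d dP : Order.disp_t) (Q : porderType d) (P : porderType dP) (e : Q -> P).

Definition fibre (p : P) : pred Q := fun q => e q == p.

Lemma order_convex_fibre (e_homo : {homo e : x y / (x <= y)%O}) p : order_convex (fibre p).
Proof.
move=> a b c ab bc /eqP ea /eqP ec; rewrite /fibre eq_le.
by rewrite -{1}ec -ea !e_homo.
Qed.

End Fibres.
Arguments order_convex_fibre {d dP Q P e} e_homo p.

Section AdditiveAmplitude.
Variables (F : fieldType) (d : Order.disp_t) (Q : porderType d) (R : realType).
Variables (X : set (set Q)) (alpha : pmod F Q -> \bar R).
Hypothesis alphaA : additive_amplitude (encoded X) alpha.
Local Open Scope ereal_scope.

Lemma amplitude_ge0 M : encoded X M -> 0 <= alpha M.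
Proof. by case: alphaA => -[+ _ _] _; apply. Qed.

Lemma amplitude_dim0 M : encoded X M -> (forall q, pdim M q = 0%N) -> alpha M = 0.
Proof. by case: alphaA => -[_ + _] _; apply. Qed.

Lemma amplitude_ses (A B C : pmod F Q) f g :
  encoded X A -> encoded X B -> encoded X C -> @ses F d Q A B C f g ->
  alpha B = alpha A + alpha C.
Proof. by case: alphaA => _; apply. Qed.

Lemma amplitude_iso (A B : pmod F Q) :
  encoded X A -> encoded X B -> pm_iso A B -> alpha A = alpha B.
Proof.
move=> encA encB [f [g [f_nat _ fg]]]; have enc0 := encoded_const 0 encA.
suff -> : alpha B = alpha A + alpha (const_pmod F Q 0).
  by rewrite (amplitude_dim0 enc0) ?adde0.
apply: (amplitude_ses encA encB enc0 (f := f) (g := fun=> 0%R)); split=> // [p q h | q].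
  by rewrite mulmx0 mul0mx.
have [fg1 gf1] := fg q; have /andP[free full] := mulmx_inv_free_full fg1 gf1.
exact: mx_exact_unit0.
Qed.

Definition amplitude_indicator (C : pred Q) : \bar R :=
  if pselect (order_convex C) is left convC then alpha (indicator_pmod F convC 1) else 0.

Lemma amplitude_indicatorE (C : pred Q) (convC : order_convex C) :
  amplitude_indicator C = alpha (indicator_pmod F convC 1).
Proof.
rewrite /amplitude_indicator; case: pselect => [convC' | /(_ convC)//].
by rewrite (Prop_irrelevance convC' convC).
Qed.

Section Encoding.
Variables (dP : Order.disp_t) (P : finPOrderType dP) (e : Q -> P).
Hypotheses (e_homo : {homo e : x y / (x <= y)%O}) (fibreX : forall p, X (e @^-1` [set p])).

Lemma amplitude_indicator_ge0 p : 0 <= amplitude_indicator (fibre e p).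
Proof.
rewrite (amplitude_indicatorE (order_convex_fibre e_homo p)).
rewrite -(pullback_indicator F e_homo (order_convex_pred1 p)).
by apply: amplitude_ge0; apply: encoded_pullback.
Qed.

Lemma amplitude_pullback_indicator p m :
  alpha (pullback (indicator_pmod F (order_convex_pred1 p) m) e_homo) =
  m%:R%:E * amplitude_indicator (fibre e p).
Proof.
elim: m => [|m IHm].
  rewrite mul0e; apply: amplitude_dim0; first exact: encoded_pullback.
  by move=> q /=; case: ifP.
have S := ses_pullback e_homo (ses_indicator_succ F (order_convex_pred1 p) m).
rewrite (amplitude_ses _ _ _ S); try exact: encoded_pullback.
rewrite IHm (pullback_indicator F e_homo _ (order_convex_fibre e_homo p)) -amplitude_indicatorE.
by rewrite -natr1 EFinD addeC ge0_muleDl ?lee_fin ?ler0n ?mul1e.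
Qed.

Lemma amplitude_pullback_restr (N : pmod F P) (T : {set P}) (downT : is_downset T) :
  alpha (pullback (restr_pmod N (order_convex_downset downT)) e_homo) =
  \sum_(p in T) (pdim N p)%:R%:E * amplitude_indicator (fibre e p).
Proof.
have [n] := ubnP #|T|; elim: n T downT => // n IHn T downT cardT.
have [T0 | [p0 p0T]] := set_0Vmem T.
  subst T; rewrite big_set0; apply: amplitude_dim0; first exact: encoded_pullback.
  by move=> q /=; rewrite inE.
have [p pT p_max] := exists_maximal p0T.
have downTp : is_downset (T :\ p).
  move=> a b ab; rewrite !inE => /andP[bp bT]; rewrite (downT _ _ ab bT) andbT.
  by apply: contraNneq bp => ap; subst a; rewrite (p_max _ bT ab).
have [f [g S]] := ses_restr_maximal N downT downTp pT p_max.
rewrite (amplitude_ses _ _ _ (ses_pullback e_homo S)); try exact: encoded_pullback.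
rewrite amplitude_pullback_indicator IHn; last by rewrite (cardsD1 p T) pT in cardT.
by rewrite [in RHS](bigD1 p) //=; congr (_ + _); apply: eq_bigl => r; rewrite !inE andbC.
Qed.

Lemma amplitude_pullback (N : pmod F P) :
  alpha (pullback N e_homo) = \sum_p (pdim N p)%:R%:E * amplitude_indicator (fibre e p).
Proof.
have downT : is_downset [set: P] by move=> *; rewrite inE.
have restrT : restr_pmod N (order_convex_downset downT) = N.
  rewrite (@restr_pmod_ext _ _ _ N _ predT _ (fun _ _ _ _ _ _ _ => isT)) ?restr_pmod_predT //.
  by move=> p; rewrite inE.
by rewrite -{1}restrT amplitude_pullback_restr; apply: eq_bigl => p; rewrite inE.
Qed.

End Encoding.

End AdditiveAmplitude.

Section SetAlgebra.
Variable T : Type.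

Lemma gen_algebra_is_algebra (G : set (set T)) : is_algebra (gen_algebra G).
Proof.
split=> [Y [] // | A GA Y algY GY | A B GA GB Y algY GY]; case: (algY) => _ YC YU.
- by apply: YC; apply: GA.
- by apply: YU; [apply: GA | apply: GB].
Qed.

Lemma sub_gen_algebra (G : set (set T)) : G `<=` gen_algebra G.
Proof. by move=> A GA Y _; apply. Qed.

Lemma gen_algebra_smallest (G Y : set (set T)) :
  is_algebra Y -> G `<=` Y -> gen_algebra G `<=` Y.
Proof. by move=> algY GY A; apply. Qed.

Variable Y : set (set T).
Hypothesis algY : is_algebra Y.

Lemma algebra0 : Y set0.
Proof. by case: algY. Qed.

Lemma algebraC A : Y A -> Y (~` A).
Proof. by case: algY => _ + _; apply. Qed.

Lemma algebraU A B : Y A -> Y B -> Y (A `|` B).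
Proof. by case: algY => _ _; apply. Qed.

Lemma algebraT : Y setT.
Proof. by rewrite -setC0; apply/algebraC/algebra0. Qed.

Lemma algebraI A B : Y A -> Y B -> Y (A `&` B).
Proof.
by move=> YA YB; rewrite -[A `&` B]setCK setCI; apply/algebraC/algebraU; apply: algebraC.
Qed.

Lemma algebraD A B : Y A -> Y B -> Y (A `\` B).
Proof. by move=> YA YB; rewrite setDE; apply: algebraI => //; apply: algebraC. Qed.

Lemma algebra_bigsetU (I : Type) (s : seq I) (P : pred I) (B : I -> set T) :
  (forall i, P i -> Y (B i)) -> Y (\big[setU/set0]_(i <- s | P i) B i).
Proof. by move=> YB; apply: big_ind => //; [apply: algebra0 | apply: algebraU]. Qed.

End SetAlgebra.

Section Content.
Variables (T : Type) (R : realType) (A : set (set T)) (nu : set T -> \bar R).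
Hypotheses (algA : is_algebra A) (nuA : content A nu).
Local Open Scope ereal_scope.

Lemma content0 : nu set0 = 0.
Proof. by case: nuA. Qed.

Lemma content_ge0 B : A B -> 0 <= nu B.
Proof. by case: nuA => _ + _; apply. Qed.

Lemma contentU B C : A B -> A C -> B `&` C = set0 -> nu (B `|` C) = nu B + nu C.
Proof. by case: nuA => _ _; apply. Qed.

Lemma content_bigsetU (I : choiceType) (s : seq I) (P : pred I) (B : I -> set T) :
  uniq s -> (forall i, P i -> A (B i)) ->
  (forall i j, P i -> P j -> i != j -> B i `&` B j = set0) ->
  nu (\big[setU/set0]_(i <- s | P i) B i) = \sum_(i <- s | P i) nu (B i).
Proof.
move=> + AB disjB; elim: s => [|i s IHs]; first by rewrite !big_nil content0.
rewrite cons_uniq => /andP[i_notin_s uniq_s]; rewrite !big_cons.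
case: ifP => Pi; last exact: IHs.
rewrite contentU ?IHs //; [exact: AB | exact: algebra_bigsetU |].
rewrite -bigcup_seq_cond; apply/seteqP; split=> // q [Biq [j /andP[js Pj] Bjq]].
have ij : i != j by apply: contraNneq i_notin_s => ->.
by rewrite -(disjB i j Pi Pj ij).
Qed.

Lemma nat_integral_partition (I : finType) (B : I -> set T) (v : I -> nat) (f : T -> nat) :
  (forall i, A (B i)) -> (forall i j, i != j -> B i `&` B j = set0) ->
  (forall q, exists i, B i q) -> (forall i q, B i q -> f q = v i) ->
  nat_integral nu f = \sum_i (v i)%:R%:E * nu (B i).
Proof.
move=> AB disjB coverB fB; rewrite /nat_integral /hbound.
case: pselect => [bounded | unbounded]; last first.
  exfalso; apply: unbounded; exists (\max_i v i).+1 => q.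
  have [i Biq] := coverB q; rewrite (fB _ _ Biq) ltnS.
  exact: (@leq_bigmax _ (fun i => v i)).
case: (cid bounded) => N f_lt_N /=.
have level_set n : f @^-1` [set n] = \big[setU/set0]_(i <- index_enum I | v i == n) B i.
  rewrite -bigcup_seq_cond; apply/seteqP; split=> q /=.
    move=> fq; have [i Biq] := coverB q; exists i => //.
    by rewrite /mkset mem_index_enum -fq (fB _ _ Biq) eqxx.
  by move=> [i /andP[_ /eqP <-] Biq]; apply: fB.
transitivity (\sum_(n < N) \sum_(i | v i == n) (v i)%:R%:E * nu (B i)).
  apply: eq_bigr => n _; rewrite level_set content_bigsetU ?index_enum_uniq //; last first.
    by move=> i j _ _; apply: disjB.
  rewrite ge0_sume_distrr => [|i _]; last exact: content_ge0.
  by apply: eq_bigr => i /eqP ->.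
rewrite (exchange_big_dep xpredT) //=; apply: eq_bigr => i _.
case: (ltnP (v i) N) => [vi_lt_N | N_le_vi].
  by rewrite (big_pred1 (Ordinal vi_lt_N)) // => n /=; rewrite -val_eqE /= eq_sym.
rewrite big_pred0 => [|n]; last first.
  by apply/negbTE/eqP => vi_n; move: (ltn_ord n); rewrite -vi_n ltnNge N_le_vi.
suff -> : B i = set0 by rewrite content0 mule0.
apply/seteqP; split=> // q Biq; have := f_lt_N q.
by rewrite (fB _ _ Biq) ltnNge N_le_vi.
Qed.

End Content.

Lemma disjoint_fibres (U : Type) (V : eqType) (e : U -> V) (s t : V) :
  s != t -> e @^-1` [set s] `&` e @^-1` [set t] = set0.
Proof. by move=> st; apply/seteqP; split=> // q [/= es et]; move: st; rewrite -es -et eqxx. Qed.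

Section Encodings.
Variables (d : Order.disp_t) (Q : porderType d) (X : set (set Q)).
Hypothesis algX : is_algebra X.

Definition upset_algebra := gen_algebra (fun U : set Q => is_upset U /\ X U).

Lemma upset_algebra_is_algebra : is_algebra upset_algebra.
Proof. exact: gen_algebra_is_algebra. Qed.

Record encoding := Encoding {
  enc_disp : Order.disp_t;
  enc_poset : finPOrderType enc_disp;
  enc_fun : Q -> enc_poset;
  enc_homo : {homo enc_fun : x y / (x <= y)%O};
  enc_fibreX : forall p, X (enc_fun @^-1` [set p]) }.

Lemma encoding_preimageE (r : encoding) (T : pred (enc_poset r)) :
  [set q | T (enc_fun r q)] =
  \big[setU/set0]_(t <- index_enum (enc_poset r) | T t) (enc_fun r @^-1` [set t]).
Proof.
rewrite -bigcup_seq_cond; apply/seteqP; split=> q /=.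
  by move=> Tq; exists (enc_fun r q); rewrite /mkset ?mem_index_enum.
by move=> [t /andP[_ Tt] /= ->].
Qed.

Lemma encoding_preimageX (r : encoding) (T : pred (enc_poset r)) :
  X [set q | T (enc_fun r q)].
Proof. by rewrite encoding_preimageE; apply: algebra_bigsetU => // t _; apply: enc_fibreX. Qed.

Lemma encoding_fibre_upset_algebra (r : encoding) p :
  upset_algebra (enc_fun r @^-1` [set p]).
Proof.
have -> : enc_fun r @^-1` [set p] =
    [set q | (p <= enc_fun r q)%O] `\` [set q | (p < enc_fun r q)%O].
  apply/seteqP; split=> q /=; first by move=> ->; rewrite lexx ltxx.
  by move=> [pq /negP]; rewrite lt_def pq andbT negbK => /eqP ->.
apply: (algebraD upset_algebra_is_algebra).
  apply: sub_gen_algebra; split; last exact: (encoding_preimageX (fun t => p <= t)%O).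
  by move=> u v /= pu uv; apply: le_trans pu (enc_homo r uv).
apply: sub_gen_algebra; split; last exact: (encoding_preimageX (fun t => p < t)%O).
by move=> u v /= pu uv; apply: lt_le_trans pu (enc_homo r uv).
Qed.

Definition encoded_set (A : set Q) : Prop :=
  exists (r : encoding) (T : pred (enc_poset r)), A = [set q | T (enc_fun r q)].

Definition upset_encoding (U : set Q) (upU : is_upset U) (XU : X U) : encoding.
Proof.
refine (@Encoding _ bool (fun q => `[< U q >]) _ _).
- move=> a b ab; case: (asboolP (U a)) => // Ua.
  by rewrite asboolT //; apply: upU Ua ab.
- case.
    suff -> : (fun q => `[< U q >]) @^-1` [set true] = U by [].
    by apply/seteqP; split=> q /=; move/asboolP.
  suff -> : (fun q => `[< U q >]) @^-1` [set false] = ~` U by apply: algebraC.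
  by apply/seteqP; split=> q /=; [move=> + Uq; rewrite asboolT | move/asboolF].
Defined.

Definition prod_encoding (r1 r2 : encoding) : encoding.
Proof.
refine (@Encoding _ (enc_poset r1 *p enc_poset r2) (fun q => (enc_fun r1 q, enc_fun r2 q)) _ _).
- by move=> a b ab; rewrite le_pair !enc_homo.
- move=> [t1 t2].
  rewrite [_ @^-1` _](_ : _ = enc_fun r1 @^-1` [set t1] `&` enc_fun r2 @^-1` [set t2]).
    by apply: algebraI => //; apply: enc_fibreX.
  by apply/seteqP; split=> q /=; [case=> -> -> | case=> -> ->].
Defined.

Lemma encoded_set_algebra : is_algebra encoded_set.
Proof.
have r0 := upset_encoding (fun u q _ _ => I : setT q) (algebraT algX).
split.
- by exists r0, pred0; apply/seteqP; split.
- move=> A [r [T ->]]; exists r, (fun t => ~~ T t).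
  by apply/seteqP; split=> q /= /negP.
- move=> A B [r1 [T1 ->]] [r2 [T2 ->]].
  exists (prod_encoding r1 r2), (fun t => T1 t.1 || T2 t.2).
  by apply/seteqP; split=> q /=; [case=> -> | case/orP; [left | right]]; rewrite ?orbT.
Qed.

Lemma upset_algebra_encoded A : upset_algebra A -> encoded_set A.
Proof.
apply: gen_algebra_smallest; first exact: encoded_set_algebra.
move=> U [upU XU]; exists (upset_encoding upU XU), id.
by apply/seteqP; split=> q /= /asboolP.
Qed.

End Encodings.
Arguments enc_fibreX {d Q X} e p.

Section Correspondence.
Variables (F : fieldType) (d : Order.disp_t) (Q : porderType d) (R : realType).
Variables (X : set (set Q)) (algX : is_algebra X).
Local Open Scope ereal_scope.

Lemma encoded_encoding (M : pmod F Q) : encoded X M ->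
  exists (r : encoding X) (M' : pmod F (enc_poset r)), pm_iso M (pullback M' (enc_homo r)).
Proof. by move=> [dP [P [e [e_homo [M' [fibreX iso]]]]]]; exists (Encoding e_homo fibreX), M'. Qed.

Section Integral.
Variables (nu : set Q -> \bar R) (nuC : content (upset_algebra X) nu).

Lemma nat_integral_encoding (r : encoding X) (v : enc_poset r -> nat) (f : Q -> nat) :
  (forall q, f q = v (enc_fun r q)) ->
  nat_integral nu f = \sum_p (v p)%:R%:E * nu (enc_fun r @^-1` [set p]).
Proof.
move=> fv; apply: (nat_integral_partition (upset_algebra_is_algebra X) nuC).
- by move=> p; apply: encoding_fibre_upset_algebra.
- by move=> s t; apply: disjoint_fibres.
- by move=> q; exists (enc_fun r q).
- by move=> p q /= <-.
Qed.

Lemma content_encoding_preimage (r : encoding X) (T : pred (enc_poset r)) :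
  nu [set q | T (enc_fun r q)] = \sum_(t | T t) nu (enc_fun r @^-1` [set t]).
Proof.
rewrite encoding_preimageE (content_bigsetU (upset_algebra_is_algebra X) nuC) //.
- exact: index_enum_uniq.
- by move=> t _; apply: encoding_fibre_upset_algebra.
- by move=> s t _ _; apply: disjoint_fibres.
Qed.

Lemma nat_integral_ge0 (M : pmod F Q) : encoded X M -> 0 <= nat_integral nu (pdim M).
Proof.
move=> /encoded_encoding [r [M' iso]].
rewrite (nat_integral_encoding (v := pdim M') (pm_iso_pdim iso)).
apply: sume_ge0 => p _; apply: mule_ge0; first by rewrite lee_fin ler0n.
by apply: (content_ge0 nuC); apply: encoding_fibre_upset_algebra.
Qed.

Lemma nat_integral_ses (A B C : pmod F Q) f g :
  encoded X A -> encoded X C -> @ses F d Q A B C f g ->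
  nat_integral nu (pdim B) = nat_integral nu (pdim A) + nat_integral nu (pdim C).
Proof.
move=> /encoded_encoding [rA [A' isoA]] /encoded_encoding [rC [C' isoC]] S.
pose r := prod_encoding algX rA rC.
pose vA (t : enc_poset r) := pdim A' t.1; pose vC (t : enc_poset r) := pdim C' t.2.
have dimA q : pdim A q = vA (enc_fun r q) := pm_iso_pdim isoA q.
have dimC q : pdim C q = vC (enc_fun r q) := pm_iso_pdim isoC q.
have dimB q : pdim B q = (vA (enc_fun r q) + vC (enc_fun r q))%N.
  by rewrite (ses_pdim S) dimA dimC.
rewrite (nat_integral_encoding dimA) (nat_integral_encoding dimC).
rewrite (nat_integral_encoding (v := fun t => (vA t + vC t)%N) dimB).
rewrite -big_split; apply: eq_bigr => t _ /=.
by rewrite natrD EFinD ge0_muleDl ?lee_fin ?ler0n.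
Qed.

Lemma nat_integral_additive_amplitude :
  additive_amplitude (encoded X) (fun M : pmod F Q => nat_integral nu (pdim M)).
Proof.
split; last by move=> A B C f g encA _ encC; apply: nat_integral_ses.
split=> [M | Z /encoded_encoding [r [Z' _]] Z0 | A B C f g encA _ encC S].
- exact: nat_integral_ge0.
- rewrite (nat_integral_encoding (r := r) (v := fun=> 0%N) Z0).
  by rewrite big1 // => p _; rewrite mul0e.
- rewrite (nat_integral_ses encA encC S); split=> //.
  + by apply: leeDl; apply: nat_integral_ge0.
  + by apply: leeDr; apply: nat_integral_ge0.
Qed.

Lemma content_fibre_nat_integral (r : encoding X) t :
  nu (enc_fun r @^-1` [set t]) =
  nat_integral nu (pdim (pullback (indicator_pmod F (order_convex_pred1 t) 1) (enc_homo r))).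
Proof.
rewrite (nat_integral_encoding (v := fun p => nat_of_bool (p == t))) //.
rewrite (bigD1 t) //= eqxx mul1e big1 ?adde0 // => p /negbTE ->.
by rewrite mul0e.
Qed.

End Integral.

Lemma nat_integral_inj (nu1 nu2 : set Q -> \bar R) :
  content (upset_algebra X) nu1 -> content (upset_algebra X) nu2 ->
  (forall M : pmod F Q, encoded X M -> nat_integral nu1 (pdim M) = nat_integral nu2 (pdim M)) ->
  forall A, upset_algebra X A -> nu1 A = nu2 A.
Proof.
move=> nu1C nu2C eq_integral A /(upset_algebra_encoded algX) [r [T ->]].
rewrite !content_encoding_preimage //; apply: eq_bigr => t _.
rewrite !content_fibre_nat_integral //; apply: eq_integral.
by apply: encoded_pullback; apply: enc_fibreX.
Qed.

Section AmplitudeContent.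
Variable alpha : pmod F Q -> \bar R.
Hypothesis alphaA : additive_amplitude (encoded X) alpha.

Definition fibre_amplitude (r : encoding X) (t : enc_poset r) : \bar R :=
  amplitude_indicator alpha (fibre (enc_fun r) t).

Lemma fibre_amplitude_ge0 (r : encoding X) (t : enc_poset r) : 0 <= fibre_amplitude t.
Proof. exact: (amplitude_indicator_ge0 alphaA (enc_homo r) (enc_fibreX r)). Qed.

Lemma fibre_amplitude_empty (r : encoding X) (t : enc_poset r) :
  (forall q, enc_fun r q != t) -> fibre_amplitude t = 0.
Proof.
move=> t_not_hit; have := amplitude_pullback_indicator alphaA (enc_homo r) (enc_fibreX r) t 1.
rewrite mul1e /fibre_amplitude => <-; apply: (amplitude_dim0 alphaA).
  by apply: encoded_pullback; apply: enc_fibreX.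
by move=> q /=; rewrite (negbTE (t_not_hit q)).
Qed.

(* The indicator module of a fibre of r is pulled back from a module on the
   finer poset of r', whose dimension vector is the indicator of a fibre of pi. *)
Lemma fibre_amplitude_refine (r r' : encoding X) (pi : enc_poset r' -> enc_poset r)
    (pi_homo : {homo pi : x y / (x <= y)%O}) (r_pi : forall q, enc_fun r q = pi (enc_fun r' q)) p :
  fibre_amplitude p = \sum_(t | pi t == p) fibre_amplitude t.
Proof.
have pi_r'_homo : {homo pi \o enc_fun r' : x y / (x <= y)%O}.
  by move=> x y xy; apply/pi_homo/enc_homo.
have convp := order_convex_fibre pi_homo p.
rewrite /fibre_amplitude (amplitude_indicatorE alpha (order_convex_fibre (enc_homo r) p)).
have -> : indicator_pmod F (order_convex_fibre (enc_homo r) p) 1 =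
    pullback (indicator_pmod F convp 1) (enc_homo r').
  rewrite (pullback_indicator F (enc_homo r') convp (order_convex_fibre pi_r'_homo p)).
  by apply: restr_pmod_ext => q; rewrite /fibre r_pi.
rewrite (amplitude_pullback alphaA (enc_homo r') (enc_fibreX r')) [RHS]big_mkcond.
by apply: eq_bigr => t _; rewrite /= /fibre; case: (pi t == p); rewrite ?mul1e ?mul0e.
Qed.

Definition preimage_amplitude (r : encoding X) (T : pred (enc_poset r)) : \bar R :=
  \sum_(t | T t) fibre_amplitude t.

Lemma preimage_amplitude_refine (r r' : encoding X) (pi : enc_poset r' -> enc_poset r)
    (pi_homo : {homo pi : x y / (x <= y)%O}) (r_pi : forall q, enc_fun r q = pi (enc_fun r' q))
    (T : pred (enc_poset r)) :
  preimage_amplitude T = preimage_amplitude (fun t => T (pi t)).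
Proof.
rewrite /preimage_amplitude; under eq_bigr do rewrite (fibre_amplitude_refine pi_homo r_pi).
rewrite (partition_big pi T) //; apply: eq_bigr => p Tp.
by apply: eq_bigl => t; case: (pi t =P p) => [-> | _]; rewrite ?Tp ?andbF.
Qed.

Lemma preimage_amplitude_eq (r1 r2 : encoding X) (T1 : pred (enc_poset r1))
    (T2 : pred (enc_poset r2)) :
  [set q | T1 (enc_fun r1 q)] = [set q | T2 (enc_fun r2 q)] ->
  preimage_amplitude T1 = preimage_amplitude T2.
Proof.
move=> eqT; pose r := prod_encoding algX r1 r2.
have fst_homo : {homo (fun t : enc_poset r => t.1) : x y / (x <= y)%O}.
  by move=> [? ?] [? ?]; rewrite le_pair => /andP[].
have snd_homo : {homo (fun t : enc_poset r => t.2) : x y / (x <= y)%O}.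
  by move=> [? ?] [? ?]; rewrite le_pair => /andP[].
rewrite (@preimage_amplitude_refine r1 r _ fst_homo (fun=> erefl)).
rewrite (@preimage_amplitude_refine r2 r _ snd_homo (fun=> erefl)).
rewrite /preimage_amplitude big_mkcond [RHS]big_mkcond; apply: eq_bigr => t _.
have T12 q : T1 (enc_fun r1 q) = T2 (enc_fun r2 q).
  by apply/idP/idP => Tq; [have : [set q | T2 (enc_fun r2 q)] q by rewrite -eqT
                          | have : [set q | T1 (enc_fun r1 q)] q by rewrite eqT].
case: (pselect (exists q, enc_fun r q = t)) => [[q <-] | t_not_hit]; first by rewrite /= T12.
have -> : fibre_amplitude t = 0.
  by apply: fibre_amplitude_empty => q; apply/eqP => rqt; apply: t_not_hit; exists q.
by rewrite !if_same.
Qed.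

(* cid picks an arbitrary encoding presenting A; preimage_amplitude_eq makes
   the choice irrelevant. *)
Definition amplitude_content (A : set Q) : \bar R :=
  if pselect (encoded_set X A) is left encA then
    let: exist r encAr := cid encA in let: exist T _ := cid encAr in preimage_amplitude T
  else 0.

Lemma amplitude_contentE (r : encoding X) (T : pred (enc_poset r)) A :
  A = [set q | T (enc_fun r q)] -> amplitude_content A = preimage_amplitude T.
Proof.
move=> eqA; rewrite /amplitude_content; case: pselect => [encA | []]; last by exists r, T.
case: (cid encA) => r0 encAr0; case: (cid encAr0) => T0 eqT0.
by apply: preimage_amplitude_eq; rewrite -eqT0 -eqA.
Qed.

Lemma amplitude_content_content : content (upset_algebra X) amplitude_content.
Proof.
split=> [|A /(upset_algebra_encoded algX) [r [T ->]] | A B].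
- pose r0 := upset_encoding algX (fun u q _ _ => I : setT q) (algebraT algX).
  rewrite (@amplitude_contentE r0 pred0) ?/preimage_amplitude ?big_pred0 //.
  by apply/seteqP; split.
- by rewrite (amplitude_contentE (erefl _)); apply: sume_ge0 => t _; apply: fibre_amplitude_ge0.
move=> /(upset_algebra_encoded algX) [r1 [T1 ->]] /(upset_algebra_encoded algX) [r2 [T2 ->]] disj.
pose r := prod_encoding algX r1 r2.
rewrite (@amplitude_contentE r (fun t => T1 t.1 || T2 t.2)); last first.
  by apply/seteqP; split=> q /=; [case=> -> | case/orP; [left | right]]; rewrite ?orbT.
rewrite (@amplitude_contentE r (fun t => T1 t.1) [set q | T1 (enc_fun r1 q)]) //.
rewrite (@amplitude_contentE r (fun t => T2 t.2) [set q | T2 (enc_fun r2 q)]) //.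
rewrite /preimage_amplitude big_mkcond [X in _ = X + _]big_mkcond.
rewrite [X in _ = _ + X]big_mkcond -big_split; apply: eq_bigr => t _ /=.
case T1t: (T1 t.1); case T2t: (T2 t.2); rewrite /= ?adde0 ?add0e //.
(* a point of the fibre over t would lie in A `&` B = set0 *)
rewrite fibre_amplitude_empty ?adde0 // => q; apply/eqP => rqt.
have : ([set q | T1 (enc_fun r1 q)] `&` [set q | T2 (enc_fun r2 q)]) q.
  by rewrite /= -[enc_fun r1 q]/(enc_fun r q).1 -[enc_fun r2 q]/(enc_fun r q).2 rqt.
by rewrite disj.
Qed.

Lemma amplitude_nat_integral (M : pmod F Q) :
  encoded X M -> alpha M = nat_integral amplitude_content (pdim M).
Proof.
move=> encM; have [r [M' iso]] := encoded_encoding encM.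
rewrite (amplitude_iso alphaA encM _ iso); last by apply: encoded_pullback; apply: enc_fibreX.
rewrite (amplitude_pullback alphaA (enc_homo r) (enc_fibreX r)).
rewrite (nat_integral_encoding amplitude_content_content (v := pdim M') (pm_iso_pdim iso)).
apply: eq_bigr => p _; congr (_ * _).
rewrite (amplitude_contentE (T := pred1 p)) ?/preimage_amplitude ?big_pred1_eq //.
by apply/seteqP; split=> q /eqP.
Qed.

End AmplitudeContent.

End Correspondence.

Local Open Scope ereal_scope.

Theorem mainTheorem1 (F : fieldType) (dQ : Order.disp_t) (Q : porderType dQ)
    (R : realType) (X : set (set Q)) :
  is_algebra X -> abelian_sub F X ->
  let XUp := gen_algebra (fun U : set Q => is_upset U /\ X U) in
  let Phi := fun (nu : set Q -> \bar R) (M : pmod F Q) => nat_integral nu (pdim M) in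
  (* Phi maps contents on XUp to additive amplitudes on Vect^Q_X *)
  (forall nu, content XUp nu -> additive_amplitude (encoded X) (Phi nu))
  (* injective *)
  /\ (forall nu1 nu2, content XUp nu1 -> content XUp nu2 ->
        (forall M, encoded X M -> Phi nu1 M = Phi nu2 M) ->
        forall A, XUp A -> nu1 A = nu2 A)
  (* surjective *)
  /\ (forall alpha : pmod F Q -> \bar R, additive_amplitude (encoded X) alpha ->
        exists nu, content XUp nu /\ forall M, encoded X M -> alpha M = Phi nu M).
Proof.
move=> algX _ XUp Phi; split; [|split].
- exact: nat_integral_additive_amplitude.
- exact: nat_integral_inj.
- move=> alpha alphaA; exists (amplitude_content X alpha); split.
    exact: amplitude_content_content.
  exact: amplitude_nat_integral.
Qed.
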